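(* Let $q$ be a prime power, $m\ge2$ an integer, $n=q^m-1$, and $\delta_{\max}=q^{\lceil m/2\rceil}-1-(q-2)[m\text{ odd}]$. If $2\le\delta\le\delta_{\max}$, then the Euclidean dual code $C^\perp$ of $C=\mathcal{BCH}(n,q;\delta)$ has minimum distance $d^\perp\ge\delta_{\max}+1$.
   Context: Let $\alpha$ be a primitive element of $\mathbf{F}_{q^m}$ and $n=q^m-1$; $C_x=\{xq^k\bmod n\mid k\in\mathbf{Z}\}$. For $2\le\delta\le n$, $\mathcal{BCH}(n,q;\delta)$ is the cyclic code of length $n$ over $\mathbf{F}_q$ with generator polynomial $\prod_{z\in Z}(x-\alpha^z)$, where $Z=C_1\cup\cdots\cup C_{\delta-1}$. $C^\perp=\{y\in\mathbf{F}_q^n\mid x\cdot y=0\ \forall x\in C\}$. Iverson notation: $[P]=1$ if $P$ holds, $0$ otherwise. *)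

From HB Require Import structures.
From mathcomp Require Import all_boot all_order all_algebra all_field.
Set Implicit Arguments. Unset Strict Implicit. Unset Printing Implicit Defensive.
Import GRing.Theory.
Local Open Scope ring_scope.

(* Z = C_1 u ... u C_{delta-1}, as a set of exponents modulo n.
   C_j = { j q^k mod n | k } ; since q^m = 1 mod n, k ranges over 0..m-1. *)
Definition bch_Z (q m n delta : nat) : {set 'I_n} :=
  [set z : 'I_n | [exists j : 'I_n, (0 < j < delta)%N &&
       [exists k : 'I_m, val z == ((j * q ^ k) %% n)%N]]].

Definition bch_gen (L : fieldType) (alpha : L) (q m n delta : nat) : {poly L} :=
  \prod_(z in bch_Z q m n delta) ('X - (alpha ^+ z)%:P).

(* BCH(n,q;delta): words c of length n over F = F_q whose polynomial
   c(x) = sum_i c_i x^i is a multiple of the generator polynomial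
   (F is embedded in L by the field morphism f). *)
Definition BCH_code (F : finFieldType) (L : fieldType) (f : {rmorphism F -> L})
  (alpha : L) (q m n delta : nat) : {set 'rV[F]_n} :=
  [set c : 'rV[F]_n |
     bch_gen alpha q m n delta %| \sum_(i < n) (f (c 0 i))%:P * 'X^i].

Definition dual_code (F : finFieldType) (n : nat) (C : {set 'rV[F]_n}) :
  {set 'rV[F]_n} :=
  [set y : 'rV[F]_n | [forall x in C, \sum_(i < n) x 0 i * y 0 i == 0]].

Definition hweight (F : finFieldType) (n : nat) (y : 'rV[F]_n) : nat :=
  #|[set i : 'I_n | y 0 i != 0]|.

Definition delta_max (q m : nat) : nat :=
  (q ^ uphalf m - 1 - (q - 2) * odd m)%N.

(* Put n = q^m - 1.  For a dual word y and an exponent e such that no conjugate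
   e q^k is congruent to -z modulo n for z in Z, the syndrome
   sum_i y_i alpha^(i e) vanishes: the trace words (Tr(b alpha^(i e)))_i lie in
   the BCH code, so y is orthogonal to them, and the trace form of F_(q^m)/F_q
   is nondegenerate.  Every e < delta_max is such an exponent, because each
   element of the cyclotomic coset of e is at most n - delta_max, whereas
   e q^k + j q^k' = 0 mod n with 0 < j < delta_max would, after rotating by a
   power of q, put an element of that coset in the interval (n - delta_max, n).
   So y has delta_max consecutive vanishing syndromes, and the BCH bound gives
   hweight y >= delta_max + 1. *)

From HB Require Import structures.
From mathcomp Require Import all_boot all_order all_algebra all_field.
From mathcomp Require Import all_solvable zify.
Import GRing.Theory.

Set Implicit Arguments.
Unset Strict Implicit.

(* Multiplying by Y modulo X Y - 1 is a rotation: the high part a wraps around. *)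
Lemma mod_predn_mul_le a b X Y :
  b < X -> 0 < Y -> ((a * X + b) * Y) %% (X * Y - 1) <= a + b * Y.
Proof.
move=> bX Y_gt0.
have XY_gt0 : 0 < X * Y by rewrite muln_gt0 Y_gt0 andbT; lia.
have -> : (a * X + b) * Y = a * (X * Y - 1) + (a + b * Y).
  by rewrite mulnBr muln1 addnA subnK ?mulnDl ?mulnA // -mulnA leq_pmulr.
by rewrite modnMDl leq_mod.
Qed.

Lemma expn_mod_predn q m t : 0 < q -> q ^ t = q ^ (t %% m) %[mod q ^ m - 1].
Proof.
move=> q_gt0; set n := q ^ m - 1.
have qm1 : q ^ m = 1 %[mod n].
  by rewrite /n -{1}(subnK (_ : 0 < q ^ m)) ?expn_gt0 ?q_gt0 // modnDl.
rewrite {1}(divn_eq t m) expnD (mulnC (t %/ m)) expnM -modnMml -modnXm qm1.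
by rewrite modnXm exp1n modnMml mul1n.
Qed.

(* The rotation of e by (m + 1)/2 for odd m = 2u + 1, the only one where the
   bound needs e < delta_max = q Q - 1 - (q - 2) rather than e < q Q (Q = q^u). *)
Lemma odd_middle_rot_bound q Q a b :
  1 < q -> a * Q + b < q * Q - 1 - (q - 2) -> b < Q ->
  a + b * (q * Q) + (q * Q - 1 - (q - 2)) <= q * Q * Q - 1.
Proof.
move=> q_gt1 eD b_lt.
have q_le : q <= q * Q by rewrite leq_pmulr //; apply: leq_ltn_trans b_lt.
have a_lt : a < q by nia.
by case: (ltnP a (q - 1)) => _; nia.
Qed.

Lemma cyclotomic_coset_bound q m e t : 1 < q -> 0 < m -> e < delta_max q m ->
  (e * q ^ t) %% (q ^ m - 1) + delta_max q m <= q ^ m - 1.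
Proof.
move=> q_gt1 m_gt0; have q_gt0 : 0 < q by lia.
wlog tm : t / t < m => [base_case|].
  by rewrite -modnMmr (@expn_mod_predn q m t q_gt0) modnMmr; apply/base_case/ltn_pmod.
rewrite /delta_max => eD.
have /esym m_eq := odd_double_half m; have h_eq := uphalf_half m.
set c := nat_of_bool (odd m) in m_eq h_eq eD *.
set u := m./2 in m_eq h_eq; set h := uphalf m in h_eq eD *; set Q := q ^ u.
have Q_gt0 : 0 < Q by rewrite expn_gt0 q_gt0.
have qm : q ^ m = q ^ c * Q * Q by rewrite m_eq -addnn !expnD mulnA.
have qh : q ^ h = q ^ c * Q by rewrite h_eq expnD.
have c01 : c = 0 \/ c = 1 by rewrite /c; case: (odd m); [right | left].
clearbody c u h.
have [tu | ut] := leqP t u.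
  have rot : (e * q ^ t) %% (q ^ m - 1) <= e * Q.
    by rewrite (leq_trans (leq_mod _ _)) // leq_mul // leq_pexp2l.
  apply: leq_trans (leq_add rot (leqnn _)) _.
  rewrite qm qh in eD *.
  by case: c01 => c_eq; rewrite c_eq ?expn0 ?expn1 ?mul1n in eD *; nia.
pose X := q ^ (m - t); pose Y := q ^ t.
have XY : X * Y = q ^ m by rewrite /X /Y -expnD subnK // ltnW.
have Y_gt0 : 0 < Y by rewrite expn_gt0 q_gt0.
have e_eq := divn_eq e X; set a := e %/ X in e_eq; set b := e %% X in e_eq.
have b_lt : b < X by rewrite ltn_pmod ?expn_gt0 ?q_gt0.
have rot := @mod_predn_mul_le a b X Y b_lt Y_gt0; rewrite -e_eq XY in rot.
apply: leq_trans (leq_add rot (leqnn _)) _.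
have [ht | th] := ltnP h t.
  have a_le : a <= e by rewrite leq_div.
  have bY : b * Y + Y <= q ^ m by rewrite -XY addnC -mulSn leq_mul2r b_lt orbT.
  have hY : q * q ^ h <= Y by rewrite -expnS leq_pexp2l.
  have h2 : 2 * q ^ h <= q * q ^ h by rewrite leq_mul2r q_gt1 orbT.
  clearbody a b X Y; lia.
have [c1 th'] : c = 1 /\ t = h by clear -h_eq ut th c01; lia.
have XQ : X = Q by rewrite /X /Q (_ : m - t = u) //; clear -m_eq th' h_eq c1; lia.
have YQ : Y = q * Q by rewrite /Y th' h_eq c1 add1n expnS.
rewrite qh qm c1 expn1 muln1 in eD *; rewrite YQ.
rewrite e_eq XQ in eD; rewrite XQ in b_lt.
exact: odd_middle_rot_bound.
Qed.

Lemma coset_sum_not_dvd q m e j k k' : 1 < q -> 0 < m ->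
  e < delta_max q m -> 0 < j < delta_max q m ->
  ~~ (q ^ m - 1 %| e * q ^ k + (j * q ^ k') %% (q ^ m - 1)).
Proof.
move=> q_gt1 m_gt0 eD /andP[j_gt0 jD]; set n := q ^ m - 1.
have q_gt0 : 0 < q by lia.
set s := m - k' %% m.
have qk's : q ^ (k' + s) = 1 %[mod n].
  rewrite (@expn_mod_predn q m _ q_gt0) -modnDml addnC subnK ?modnn ?expn0 //.
  exact/ltnW/ltn_pmod.
apply/negP; rewrite /dvdn modnDmr => /eqP/(congr1 (fun x => x * q ^ s %% n)).
rewrite mod0n modnMml mulnDl -!mulnA -!expnD -modnDmr -modnMmr qk's modnMmr muln1.
rewrite modnDmr -modnDml => /eqP; rewrite -/(dvdn _ _) => dvd.
have := @cyclotomic_coset_bound q m e (k + s) q_gt1 m_gt0 eD; rewrite -/n => bound.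
have : (e * q ^ (k + s)) %% n + j < n by apply: leq_trans bound; rewrite ltn_add2l.
by rewrite ltnNge dvdn_leq // ltn_addl.
Qed.

Local Open Scope ring_scope.

Section FiniteFieldTrace.
Variables (F L : finFieldType) (f : {rmorphism F -> L}) (q m : nat).
Hypotheses (card_F : #|F| = q) (m_gt0 : (0 < m)%N) (card_L : #|L| = (q ^ m)%N).

Lemma card_F_gt1 : (1 < q)%N. Proof. by rewrite -card_F finNzRing_gt1. Qed.

Lemma pchar_nat_card_F : [pchar L].-nat q.
Proof.
have [p p_pr pcharFp] := finPcharP F.
have := abelem_pgroup (fin_ring_pchar_abelem pcharFp).
rewrite /pgroup cardsT card_F; apply: sub_in_pnat => r _.
by rewrite inE => /eqP ->; apply: rmorph_pchar pcharFp.
Qed.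

Lemma exprD_qpow k (x y : L) : (x + y) ^+ (q ^ k) = x ^+ (q ^ k) + y ^+ (q ^ k).
Proof. by apply: exprDn_pchar; rewrite pnatX pchar_nat_card_F. Qed.

Lemma fmorph_expr_qpow k a : f a ^+ (q ^ k) = f a.
Proof.
elim: k => [|k IHk]; first by rewrite expr1.
by rewrite expnSr exprM IHk -rmorphXn -card_F expf_card.
Qed.

Lemma fixed_expr_q_in_codom (x : L) : x ^+ q = x -> x \in codom f.
Proof.
move=> xq; have := congr1 (map_poly f) (finField_genPoly F).
rewrite rmorphB /= map_polyXn map_polyX rmorph_prod /= card_F => genL.
have : root ('X^q - 'X) x by rewrite rootE !hornerE xq subrr.
rewrite genL rootE horner_prod => /prodf_eq0[a _].
by rewrite map_polyXsubC hornerXsubC subr_eq0 => /eqP ->; apply: codom_f.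
Qed.

Lemma expr0_qpow k : (0 : L) ^+ (q ^ k) = 0.
Proof. by rewrite expr0n expn_eq0 eqn0Ngt (ltnW card_F_gt1). Qed.

Lemma expr_qpow_sum k N (g : 'I_N -> L) :
  (\sum_(i < N) g i) ^+ (q ^ k) = \sum_(i < N) g i ^+ (q ^ k).
Proof. exact: (big_morph _ (exprD_qpow k) (expr0_qpow k)). Qed.

Lemma expr_qpow_mod (x : L) t : x ^+ (q ^ t) = x ^+ (q ^ (t %% m))%N.
Proof.
rewrite {1}(divn_eq t m) expnD exprM; congr (_ ^+ _).
elim: (t %/ m)%N => [|c IHc]; first by rewrite mul0n expr1.
by rewrite mulSn expnD exprM -card_L expf_card.
Qed.

Definition trace (x : L) := \sum_(k < m) x ^+ (q ^ k).

Lemma traceD x y : trace (x + y) = trace x + trace y.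
Proof. by rewrite -big_split; apply: eq_bigr => k _; rewrite exprD_qpow. Qed.

Lemma trace0 : trace 0 = 0.
Proof. by rewrite /trace big1 // => k _; rewrite expr0_qpow. Qed.

Lemma trace_sum N (g : 'I_N -> L) : trace (\sum_(i < N) g i) = \sum_(i < N) trace (g i).
Proof. exact: (big_morph trace traceD trace0). Qed.

Lemma trace_fmorphM a x : trace (f a * x) = f a * trace x.
Proof.
by rewrite mulr_sumr; apply: eq_bigr => k _; rewrite exprMn fmorph_expr_qpow.
Qed.

Lemma trace_in_codom x : trace x \in codom f.
Proof.
apply: fixed_expr_q_in_codom; rewrite -[X in _ ^+ X]expn1 expr_qpow_sum.
rewrite [RHS](reindex_inj (@ordS_inj m)) /=; apply: eq_bigr => k _.
by rewrite -exprM -expnSr [in LHS]expr_qpow_mod.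
Qed.

Lemma trace_neq0 : exists x, trace x != 0.
Proof.
have [x tr_x | tr0] := pickP (fun x => trace x != 0); first by exists x.
pose P : {poly L} := \sum_(k < m) 'X^(q ^ k).
have q_gt1 := card_F_gt1.
have coefP : P`_(q ^ m.-1) = 1.
  rewrite coef_sum -(prednK m_gt0) big_ord_recr /= coefXn eqxx big1 ?add0r // => k _.
  by rewrite coefXn eqn_exp2l // eq_sym (ltn_eqF (ltn_ord k)).
have sizeP : (size P <= (q ^ m.-1).+1)%N.
  apply: leq_trans (size_sum _ _ _) _; apply/bigmax_leqP => k _.
  by rewrite size_polyXn ltnS leq_pexp2l ?(ltnW q_gt1) // -ltnS prednK.
have P_neq0 : P != 0.
  by apply: contra_eqN coefP => /eqP ->; rewrite coef0 eq_sym oner_eq0.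
have rootsP : all (root P) (enum L).
  apply/allP => x _; rewrite rootE horner_sum.
  under eq_bigr => k _ do rewrite hornerXn.
  exact: negbFE (tr0 x).
have := leq_trans (max_poly_roots P_neq0 rootsP (enum_uniq L)) sizeP.
by rewrite -cardE card_L ltnS leqNgt ltn_exp2l // ltn_predL m_gt0.
Qed.

Lemma trace_nondegenerate g : (forall b, trace (b * g) = 0) -> g = 0.
Proof.
move=> tr_bg0; apply/eqP/contraT => g_neq0.
by have [x] := trace_neq0; rewrite -(divfK g_neq0 x) tr_bg0 eqxx.
Qed.
End FiniteFieldTrace.

Section BCHBound.
Variables (F L : finFieldType) (f : {rmorphism F -> L}) (n : nat) (alpha : L).
Hypothesis alpha_prim : n.-primitive_root alpha.

Lemma eq_prim_expr_ord (i j : 'I_n) : (alpha ^+ i == alpha ^+ j) = (i == j).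
Proof. by rewrite (eq_prim_root_expr alpha_prim) !modn_small. Qed.

Definition syndrome (y : 'rV[F]_n) (e : nat) :=
  \sum_(i < n) f (y 0 i) * alpha ^+ (i * e).

Lemma bch_bound D (y : 'rV[F]_n) :
  y != 0 -> (forall e, (e < D)%N -> syndrome y e = 0) -> (D < hweight y)%N.
Proof.
move=> y_neq0 syn0; rewrite ltnNge; apply/negP => wtD.
have [i0 yi0] : exists i0, y 0 i0 != 0.
  apply/existsP; apply: contraNT y_neq0; rewrite negb_exists => /forallP y0.
  by apply/eqP/rowP => i; rewrite mxE; apply/eqP/negPn.
set S := [set i | y 0 i != 0].
pose P : {poly L} := \prod_(i in S :\ i0) ('X - (alpha ^+ i)%:P).
have sizeP : (size P <= D)%N.
  rewrite /P -big_enum size_prod_XsubC -cardE.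
  by move: wtD; rewrite /hweight -/S (cardsD1 i0 S) inE yi0.
have syn_sum :
    \sum_(e < D) P`_e * syndrome y e = \sum_(i < n) f (y 0 i) * P.[alpha ^+ i].
  under eq_bigr => e _ do rewrite mulr_sumr.
  rewrite exchange_big; apply: eq_bigr => i _.
  rewrite (horner_coef_wide _ sizeP) mulr_sumr; apply: eq_bigr => e _.
  by rewrite mulrCA exprM.
have syn_i0 :
    \sum_(i < n) f (y 0 i) * P.[alpha ^+ i] = f (y 0 i0) * P.[alpha ^+ i0].
  rewrite (bigD1 i0) //= big1 ?addr0 // => i i_neq0.
  have [->|yi] := eqVneq (y 0 i) 0; first by rewrite rmorph0 mul0r.
  have iS : i \in S :\ i0 by rewrite !inE i_neq0 yi.
  by rewrite horner_prod (bigD1 i) //= hornerXsubC subrr mul0r mulr0.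
move: syn_sum; rewrite syn_i0 big1 => [|e _]; last by rewrite syn0 ?mulr0.
move/esym/eqP; rewrite mulf_eq0 fmorph_eq0 (negbTE yi0) /=; apply/negP.
rewrite horner_prod; apply/prodf_neq0 => j; rewrite !inE => /andP[j_neq0 _].
by rewrite hornerXsubC subr_eq0 eq_prim_expr_ord eq_sym.
Qed.
End BCHBound.

Lemma sum_expr_unity_eq0 (R : idomainType) (g : R) N :
  g ^+ N = 1 -> g != 1 -> \sum_(i < N) g ^+ i = 0.
Proof.
move=> gN g_neq1; apply/eqP; have := subrX1 g N; rewrite gN subrr => /esym/eqP.
by rewrite mulf_eq0 subr_eq0 (negbTE g_neq1).
Qed.

Section DualBCH.
Variables (F L : finFieldType) (f : {rmorphism F -> L}) (q m delta : nat).
Variable alpha : L.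
Hypotheses (card_F : #|F| = q) (m_gt0 : (0 < m)%N) (card_L : #|L| = (q ^ m)%N).
Local Notation n := (q ^ m - 1)%N.
Hypothesis alpha_prim : n.-primitive_root alpha.

Lemma trace_word_in_BCH b e (c : 'rV[F]_n) :
  (forall i : 'I_n, f (c 0 i) = trace q m (b * alpha ^+ (i * e))) ->
  (forall z, z \in bch_Z q m n delta -> forall k : 'I_m, ~~ (n %| e * q ^ k + z)%N) ->
  c \in BCH_code f alpha q m n delta.
Proof.
move=> c_tr Z_avoid; rewrite inE /bch_gen -big_enum /=.
rewrite -(big_map (fun z : 'I_n => alpha ^+ z) xpredT (fun r => 'X - r%:P)).
apply: uniq_roots_dvdp; last first.
  rewrite uniq_rootsE map_inj_uniq ?enum_uniq // => z1 z2 /eqP.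
  by rewrite (eq_prim_expr_ord alpha_prim) => /eqP.
apply/allP => _ /mapP[z zZ ->]; rewrite mem_enum in zZ; rewrite rootE horner_sum.
under eq_bigr => i _ do rewrite hornerCM hornerXn c_tr /trace mulr_suml.
rewrite exchange_big big1 // => k _.
rewrite (eq_bigr (fun i : 'I_n => b ^+ (q ^ k) * (alpha ^+ (e * q ^ k + z)) ^+ i)).
  rewrite -mulr_sumr sum_expr_unity_eq0 ?mulr0 //.
    by rewrite exprAC (prim_expr_order alpha_prim) expr1n.
  by rewrite -(expr0 alpha) (eq_prim_root_expr alpha_prim) mod0n Z_avoid.
move=> i _; rewrite exprMn -!exprM -mulrA -exprD; congr (_ * alpha ^+ _).
by rewrite mulnDl (mulnC i) mulnAC.
Qed.

Lemma dual_syndrome_eq0 (y : 'rV[F]_n) e :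
  y \in dual_code (BCH_code f alpha q m n delta) ->
  (forall z, z \in bch_Z q m n delta -> forall k : 'I_m, ~~ (n %| e * q ^ k + z)%N) ->
  syndrome f alpha y e = 0.
Proof.
move=> y_dual Z_avoid; apply: (trace_nondegenerate card_F m_gt0 card_L) => b.
have tr_im i := trace_in_codom f card_F card_L (b * alpha ^+ (i * e)).
pose c : 'rV[F]_n := \row_i iinv (tr_im i).
have c_tr i : f (c 0 i) = trace q m (b * alpha ^+ (i * e)) by rewrite mxE f_iinv.
have c_in := trace_word_in_BCH c_tr Z_avoid.
move: y_dual; rewrite inE => /forallP/(_ c)/implyP/(_ c_in)/eqP/(congr1 f).
rewrite rmorph0 rmorph_sum => <-; rewrite mulr_sumr (trace_sum f m card_F).
apply: eq_bigr => i _.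
by rewrite rmorphM c_tr mulrCA (trace_fmorphM f m card_F) mulrC.
Qed.
End DualBCH.

Theorem mainTheorem8
  (F L : finFieldType) (f : {rmorphism F -> L}) (q m : nat) (alpha : L)
  (delta : nat) :
  #|F| = q -> (2 <= m)%N -> #|L| = (q ^ m)%N ->
  (q ^ m - 1)%N.-primitive_root alpha ->
  (2 <= delta <= delta_max q m)%N ->
  forall y : 'rV[F]_(q ^ m - 1),
    y \in dual_code (BCH_code f alpha q m (q ^ m - 1) delta) ->
    y != 0 ->
    (delta_max q m + 1 <= hweight y)%N.
Proof.
move=> card_F m_ge2 card_L alpha_prim /andP[_ delta_le] y y_dual y_neq0.
have m_gt0 : (0 < m)%N by apply: ltnW.
rewrite addn1; apply: (bch_bound alpha_prim y_neq0) => e e_lt.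
apply: (dual_syndrome_eq0 card_F m_gt0 card_L alpha_prim y_dual) => z.
rewrite inE => /existsP[j /andP[/andP[j_gt0 j_lt] /existsP[k' /eqP ->]]] k.
apply: coset_sum_not_dvd => //; first exact: card_F_gt1 card_F.
by rewrite j_gt0 (leq_trans j_lt delta_le).
Qed.
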